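(* Let $a,b\in\mathbb{Z}$. The degree 4 symplectic polynomial $q(x)=x^4+ax^3+bx^2+ax+1$ satisfies the homological criterion (i.e. it is symplectically irreducible, is not a cyclotomic polynomial, and is not a polynomial in $x^k$ for any $k>1$) if and only if $a\ne0$, $(a,b)\notin\{(1,1),(-1,1)\}$, and $a^2-4b+8$ is not a perfect square.
   Context: A symplectic polynomial is an even-degree integer polynomial that is monic and palindromic (equivalently, the characteristic polynomial of an element of $\mathrm{Sp}(2n,\mathbb{Z})$). A symplectic polynomial is symplectically irreducible if it is not a product of two nontrivial symplectic polynomials. A cyclotomic polynomial is the minimal polynomial over $\mathbb{Q}$ of a primitive $n$-th root of unity. *)

From mathcomp Require Import all_boot all_order all_algebra all_field.
Set Implicit Arguments. Unset Strict Implicit. Unset Printing Implicit Defensive.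
Import GRing.Theory Num.Theory.
Local Open Scope ring_scope.

Definition symplectic (p : {poly int}) : Prop :=
  [/\ p \is monic, ~~ odd (size p).-1 &
      forall i : nat, (i <= (size p).-1)%N -> p`_i = p`_((size p).-1 - i)].

Definition symp_irreducible (p : {poly int}) : Prop :=
  ~ exists f g : {poly int},
      [/\ symplectic f, symplectic g, (1 < size f)%N, (1 < size g)%N & p = f * g].

Definition is_cyclotomic (p : {poly int}) : Prop :=
  exists n : nat, (0 < n)%N /\ p = 'Phi_n.

Definition poly_in_Xk (p : {poly int}) (k : nat) : Prop :=
  exists r : {poly int}, p = r \Po 'X^k.

Definition homological_criterion (p : {poly int}) : Prop :=
  [/\ symp_irreducible p, ~ is_cyclotomic p &
      forall k : nat, (1 < k)%N -> ~ poly_in_Xk p k].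

Definition q4 (a b : int) : {poly int} :=
  'X^4 + a%:P * 'X^3 + b%:P * 'X^2 + a%:P * 'X + 1.

From mathcomp Require Import all_boot all_order all_algebra all_field.
From mathcomp Require Import ring zify.
Set Implicit Arguments. Unset Strict Implicit. Unset Printing Implicit Defensive.
Import GRing.Theory Num.Theory.
Local Open Scope ring_scope.

(* Symplectic polynomials have even degree, so a symplectic factorisation of
   the quartic q4 a b is a product of two palindromic monic quadratics
   X^2 + cX + 1 and X^2 + dX + 1, i.e. a = c + d and b - 2 = c d; such integers
   c, d exist iff a^2 - 4(b - 2) is a square.  A cyclotomic quartic is 'Phi_n
   with totient n = 4, i.e. n = 5, 8, 10 or 12, and these are q4 1 1, q4 0 0,
   q4 (-1) 1 and q4 0 (-1).  Finally a composition with X^k, k > 1, has no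
   X-coefficient, so it forces a = 0, while q4 0 b is a polynomial in X^2. *)

Lemma coef_q4 (a b : int) (i : nat) :
  (q4 a b)`_i =
  if i == 0%N then 1 else if i == 1%N then a else if i == 2%N then b
  else if i == 3%N then a else if i == 4%N then 1 else 0.
Proof. by rewrite /q4 !coefE; case: i => [|[|[|[|[|i]]]]] //=; ring. Qed.

Lemma size_q4 (a b : int) : size (q4 a b) = 5%N.
Proof.
have -> : q4 a b = Poly [:: 1; a; b; a; 1].
  apply/polyP => i; rewrite coef_Poly coef_q4.
  by case: i => [|[|[|[|[|i]]]]] //=; rewrite nth_nil.
by rewrite (@PolyK _ 1) //= oner_neq0.
Qed.

Lemma q4_inj (a b a' b' : int) : q4 a b = q4 a' b' -> (a, b) = (a', b').
Proof.
move=> e; have := congr1 (fun p : {poly int} => p`_1) e.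
have := congr1 (fun p : {poly int} => p`_2) e.
by rewrite !coef_q4 /= => -> ->.
Qed.

Definition q2 (c : int) : {poly int} := 'X^2 + c%:P * 'X + 1.

Lemma coef_q2 (c : int) (i : nat) :
  (q2 c)`_i = if i == 0%N then 1 else if i == 1%N then c
              else if i == 2%N then 1 else 0.
Proof. by rewrite /q2 !coefE; case: i => [|[|[|i]]] //=; ring. Qed.

Lemma size_q2 (c : int) : size (q2 c) = 3%N.
Proof.
have -> : q2 c = Poly [:: 1; c; 1].
  apply/polyP => i; rewrite coef_Poly coef_q2.
  by case: i => [|[|[|i]]] //=; rewrite nth_nil.
by rewrite (@PolyK _ 1) //= oner_neq0.
Qed.

Lemma q2M (c d : int) : q2 c * q2 d = q4 (c + d) (2 + c * d).
Proof. by rewrite /q2 /q4 !polyCD polyCM polyC1; ring. Qed.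

Lemma symplectic_q2 (c : int) : symplectic (q2 c).
Proof.
rewrite /symplectic size_q2; split => //.
  by apply/monicP; rewrite lead_coefE size_q2 coef_q2.
by case=> [|[|[|i]]] //= _; rewrite !coef_q2.
Qed.

Lemma symplectic_size3 (f : {poly int}) :
  symplectic f -> size f = 3%N -> f = q2 f`_1.
Proof.
move=> [/monicP lead_f _ pal_f] size_f.
have f2 : f`_2 = 1 by rewrite lead_coefE size_f in lead_f.
have f0 : f`_0 = 1 by rewrite (pal_f 0%N) ?size_f.
apply/polyP => -[|[|[|i]]]; rewrite coef_q2 //=.
by rewrite nth_default // size_f.
Qed.

Lemma size_symplectic_factors (f g : {poly int}) :
  symplectic f -> symplectic g -> (1 < size f)%N -> (1 < size g)%N ->
  size (f * g) = 5%N -> size f = 3%N /\ size g = 3%N.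
Proof.
move=> [mon_f even_f _] [mon_g even_g _] f_gt1 g_gt1.
rewrite size_mul ?monic_neq0 //.
move: even_f even_g f_gt1 g_gt1.
by case: (size f) => [|[|[|[|[|[|?]]]]]];
  case: (size g) => [|[|[|[|[|[|?]]]]]] //= *; lia.
Qed.

Lemma q4_symplectic_factorP (a b : int) :
  (exists f g : {poly int},
      [/\ symplectic f, symplectic g, (1 < size f)%N, (1 < size g)%N &
          q4 a b = f * g]) <->
  exists c d : int, a = c + d /\ b - 2 = c * d.
Proof.
split=> [[f [g [sf sg f_gt1 g_gt1 def_q]]] | [c [d [-> def_b]]]].
  have [f3 g3] : size f = 3%N /\ size g = 3%N.
    by apply: size_symplectic_factors; rewrite // -def_q size_q4.
  move: def_q; rewrite (symplectic_size3 sf f3) (symplectic_size3 sg g3) q2M.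
  by case/q4_inj=> -> ->; exists f`_1, g`_1; split => //; ring.
exists (q2 c), (q2 d); rewrite !size_q2 q2M -def_b.
by split=> //; [apply: symplectic_q2 | apply: symplectic_q2 | congr q4; ring].
Qed.

Lemma sum_prod_intP (s p : int) :
  (exists c d : int, s = c + d /\ p = c * d) <->
  exists m : int, s ^+ 2 - 4 * p = m ^+ 2.
Proof.
split=> [[c [d [-> ->]]] | [m def_m]]; first by exists (c - d); ring.
(* [(s + m)^2 = 4 p + 2 m (s + m)] is even, hence so is [s + m]. *)
have : (2 %| (s + m) ^+ 2)%Z.
  have -> : (s + m) ^+ 2 = 2 * (2 * p + m * (s + m)).
    by move: def_m; rewrite !expr2; lia.
  exact: dvdz_mulr.
rewrite dvdzE abszX Euclid_dvdX // andbT -dvdzE => /dvdzP[c def_c].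
exists c, (s - c); split; first ring.
have def_m' : m = c * 2 - s by lia.
by move: def_m; rewrite def_m' !expr2; lia.
Qed.

Lemma symp_irreducible_q4 (a b : int) :
  symp_irreducible (q4 a b) <-> ~ exists m : int, a ^+ 2 - 4 * b + 8 = m ^+ 2.
Proof.
rewrite /symp_irreducible q4_symplectic_factorP sum_prod_intP.
by have -> : a ^+ 2 - 4 * b + 8 = a ^+ 2 - 4 * (b - 2) by ring.
Qed.

Lemma q4_in_Xk_coef1 (a b : int) (k : nat) :
  (1 < k)%N -> poly_in_Xk (q4 a b) k -> a = 0.
Proof.
move=> k_gt1 [r /(congr1 (fun p : {poly int} => p`_1))].
rewrite coef_comp_poly_Xn ?(ltn_trans _ k_gt1) // coef_q4 /=.
by rewrite dvdn1 gtn_eqF.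
Qed.

Lemma q4_0_in_X2 (b : int) : poly_in_Xk (q4 0 b) 2.
Proof.
exists ('X^2 + b%:P * 'X + 1).
by rewrite /q4 polyC0 !comp_polyD comp_Xn_poly comp_polyM comp_polyX comp_polyC; ring.
Qed.

Lemma Cyclotomic_eq (n : nat) (s : seq nat) (p : {poly int}) :
  (0 < n)%N -> divisors n = s ->
  p * \prod_(d <- s | d != n) 'Phi_d = 'X^n - 1 -> 'Phi_n = p.
Proof.
move=> n_gt0 def_s; rewrite -(prod_Cyclotomic n_gt0) def_s.
have n_in_s : n \in s by rewrite -def_s -dvdn_divisors.
have uniq_s : uniq s by rewrite -def_s divisors_uniq.
rewrite (bigD1_seq n n_in_s uniq_s) /= => /mulIf-> //.
by rewrite monic_neq0 // monic_prod // => d _; apply: Cyclotomic_monic.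
Qed.

Lemma Cyclotomic1 : 'Phi_1 = 'X - 1 :> {poly int}.
Proof. by apply: (@Cyclotomic_eq 1 [:: 1]) => //; rewrite big_cons big_nil /= mulr1. Qed.

Lemma Cyclotomic2 : 'Phi_2 = 'X + 1 :> {poly int}.
Proof.
apply: (@Cyclotomic_eq 2 [:: 1; 2]) => //.
by rewrite !big_cons big_nil /= Cyclotomic1; ring.
Qed.

Lemma Cyclotomic3 : 'Phi_3 = 'X^2 + 'X + 1 :> {poly int}.
Proof.
apply: (@Cyclotomic_eq 3 [:: 1; 3]) => //.
by rewrite !big_cons big_nil /= Cyclotomic1; ring.
Qed.

Lemma Cyclotomic4 : 'Phi_4 = 'X^2 + 1 :> {poly int}.
Proof.
apply: (@Cyclotomic_eq 4 [:: 1; 2; 4]) => //.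
by rewrite !big_cons big_nil /= Cyclotomic1 Cyclotomic2; ring.
Qed.

Lemma Cyclotomic5 : 'Phi_5 = 'X^4 + 'X^3 + 'X^2 + 'X + 1 :> {poly int}.
Proof.
apply: (@Cyclotomic_eq 5 [:: 1; 5]) => //.
by rewrite !big_cons big_nil /= Cyclotomic1; ring.
Qed.

Lemma Cyclotomic6 : 'Phi_6 = 'X^2 - 'X + 1 :> {poly int}.
Proof.
apply: (@Cyclotomic_eq 6 [:: 1; 2; 3; 6]) => //.
by rewrite !big_cons big_nil /= Cyclotomic1 Cyclotomic2 Cyclotomic3; ring.
Qed.

Lemma Cyclotomic8 : 'Phi_8 = 'X^4 + 1 :> {poly int}.
Proof.
apply: (@Cyclotomic_eq 8 [:: 1; 2; 4; 8]) => //.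
by rewrite !big_cons big_nil /= Cyclotomic1 Cyclotomic2 Cyclotomic4; ring.
Qed.

Lemma Cyclotomic10 : 'Phi_10 = 'X^4 - 'X^3 + 'X^2 - 'X + 1 :> {poly int}.
Proof.
apply: (@Cyclotomic_eq 10 [:: 1; 2; 5; 10]) => //.
by rewrite !big_cons big_nil /= Cyclotomic1 Cyclotomic2 Cyclotomic5; ring.
Qed.

Lemma Cyclotomic12 : 'Phi_12 = 'X^4 - 'X^2 + 1 :> {poly int}.
Proof.
apply: (@Cyclotomic_eq 12 [:: 1; 2; 3; 4; 6; 12]) => //.
rewrite !big_cons big_nil /= Cyclotomic1 Cyclotomic2 Cyclotomic3 Cyclotomic4.
by rewrite Cyclotomic6; ring.
Qed.

Lemma totient_part_dvd (n : nat) (pi : nat_pred) : (totient n`_pi %| totient n)%N.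
Proof.
have [-> | n_gt0] := posnP n; first by rewrite dvdn0.
by rewrite -{2}(partnC pi n_gt0) totient_coprime ?coprime_partC ?dvdn_mulr.
Qed.

Lemma totient_eq4_dvd120 (n : nat) : totient n = 4%N -> (n %| 120)%N.
Proof.
move=> tot_n; have n_gt0 : (0 < n)%N by rewrite -totient_gt0 tot_n.
apply/dvdn_partP => // p p_n; have e_gt0 : (0 < logn p n)%N by rewrite logn_gt0.
move: p_n; rewrite mem_primes => /and3P[p_pr _ _].
have := totient_part_dvd n p; rewrite p_part totient_pfactor // tot_n => dvd4.
(* [(p - 1) p^(e - 1)] divides 4, so [p <= 5] and [p^e] divides [4 p]. *)
have p_le5 : (p.-1 <= 4)%N.
  by apply: dvdn_leq => //; exact: dvdn_trans (dvdn_mulr _ (dvdnn _)) dvd4.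
have : (p ^ logn p n %| p * 4)%N.
  rewrite -(prednK e_gt0) expnS dvdn_pmul2l ?prime_gt0 //.
  exact: dvdn_trans (dvdn_mull _ (dvdnn _)) dvd4.
move/dvdn_trans; apply.
by move: p_pr p_le5 {e_gt0 dvd4}; case: p => [|[|[|[|[|[|p]]]]]].
Qed.

Lemma totient_eq4 (n : nat) : totient n = 4%N -> n \in [:: 5; 8; 10; 12]%N.
Proof.
move=> tot_n; have n_div : n \in divisors 120.
  by rewrite -dvdn_divisors ?totient_eq4_dvd120.
have : all (fun d => (totient d == 4) ==> (d \in [:: 5; 8; 10; 12])) (divisors 120).
  by vm_compute.
by move/allP/(_ n n_div); rewrite tot_n.
Qed.

Lemma q4_cyclotomicP (a b : int) :
  is_cyclotomic (q4 a b) <->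
  [\/ (a, b) = (1, 1), (a, b) = (0, 0), (a, b) = (-1, 1) | (a, b) = (0, -1)].
Proof.
have [Phi5 Phi8 Phi10 Phi12] : [/\ 'Phi_5 = q4 1 1, 'Phi_8 = q4 0 0,
    'Phi_10 = q4 (-1) 1 & 'Phi_12 = q4 0 (-1)].
  rewrite Cyclotomic5 Cyclotomic8 Cyclotomic10 Cyclotomic12 /q4.
  by rewrite polyCN polyC0 polyC1; split; ring.
split=> [[n [_ def_q]] | ].
  have /totient_eq4 : totient n = 4%N.
    by have := size_Cyclotomic n; rewrite -def_q size_q4 => -[].
  rewrite !inE => /or4P[] /eqP n_eq; move: def_q; rewrite n_eq.
  - by rewrite Phi5 => /q4_inj; apply: Or41.
  - by rewrite Phi8 => /q4_inj; apply: Or42.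
  - by rewrite Phi10 => /q4_inj; apply: Or43.
  - by rewrite Phi12 => /q4_inj; apply: Or44.
by case=> -[-> ->]; [exists 5%N | exists 8%N | exists 10%N | exists 12%N].
Qed.

Theorem proposition4p1 (a b : int) :
  homological_criterion (q4 a b) <->
  [/\ a != 0, ~ ((a, b) = (1, 1) \/ (a, b) = (-1, 1)) &
      ~ exists m : int, a ^+ 2 - 4 * b + 8 = m ^+ 2].
Proof.
split=> [[irr ncyc noXk] | [a_neq0 nab nosq]].
  split; last exact/symp_irreducible_q4.
    by apply/eqP=> a0; apply: (noXk 2%N isT); rewrite a0; apply: q4_0_in_X2.
  move=> ab_eq; apply: ncyc; apply/q4_cyclotomicP.
  by case: ab_eq => ->; [apply: Or41 | apply: Or43].
split; first exact/symp_irreducible_q4.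
  move=> cyc; move: a_neq0 nab.
  by case/q4_cyclotomicP: cyc => -[-> ->] // _ []; [left | right].
by move=> k k_gt1 /(q4_in_Xk_coef1 k_gt1) a0; rewrite a0 in a_neq0.
Qed.
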